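(* Assume the Dickson--Hardy--Littlewood conjecture: every admissible tuple of natural numbers is prime-producing. Let $k \geq 1$. Then every good $k$-tuple $(p_1,\dots,p_k)$ can be extended to a good $(k+1)$-tuple $(p_1,\dots,p_k,p_{k+1})$.
   Context: A tuple $(h_1,\dots,h_k)$ of natural numbers is admissible if for every prime $p$ there is at least one residue class mod $p$ containing none of $h_1,\dots,h_k$. A tuple is prime-producing if there are infinitely many integers $n$ such that $n+h_1,\dots,n+h_k$ are all prime. A good $k$-tuple is an increasing $k$-tuple $(p_1,\dots,p_k)$ of primes with $3 < p_1 < \dots < p_k$ such that, for all $1 \le i < j \le k$, the number $p_i+p_j+1$ is prime and $p_i$ does not divide $p_j+2$. *)

From mathcomp Require Import all_boot.
Set Implicit Arguments. Unset Strict Implicit. Unset Printing Implicit Defensive.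

Definition admissible (h : seq nat) : Prop :=
  forall p : nat, prime p -> exists r : nat, r < p /\ forall x, x \in h -> x %% p != r.

(* prime-producing: infinitely many n with all n + h_i prime
   (stated as: for every bound N there is n >= N that works) *)
Definition prime_producing (h : seq nat) : Prop :=
  forall N : nat, exists n : nat, N <= n /\ forall x, x \in h -> prime (n + x).

Definition DHL : Prop := forall h : seq nat, admissible h -> prime_producing h.

Definition good_tuple (k : nat) (s : seq nat) : Prop :=
  size s = k /\
  (forall i, i < k -> prime (nth 0 s i)) /\
  (forall i, i < k -> 3 < nth 0 s i) /\
  (forall i j, i < j -> j < k -> nth 0 s i < nth 0 s j) /\
  (forall i j, i < j -> j < k ->
     prime (nth 0 s i + nth 0 s j + 1) /\ ~~ (nth 0 s i %| nth 0 s j + 2)).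

From mathcomp Require Import all_boot zify.

Set Implicit Arguments.
Unset Strict Implicit.
Unset Printing Implicit Defensive.

(* The new prime is taken to be an n for which n, n + 2 and all n + p_i + 1 are
   prime, i.e. a prime-producing shift of the pattern (0, 2, p_1 + 1, ..., p_k + 1).
   Under DHL it suffices that this pattern is admissible, and the good-tuple
   conditions provide, for every prime q, a residue class mod q it misses: 1 when q
   is not some p_i (else q | p_i); 4 when q = 5 (else 5 | p_i + 2); and for the
   other p_i = q > 5 either 3 or q - 2, since both classes being hit would give
   q | p_i + p_j + 1 for some i != j.  Taking n larger than every p_i, the
   conditions p_i + n + 1 prime and p_i not dividing the prime n + 2 follow. *)

Definition dhl_pattern (s : seq nat) : seq nat := [:: 0, 2 & map succn s].

Definition avoids_residue (s : seq nat) (q r : nat) : Prop :=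
  [/\ r != 0, r != 2 %% q & forall y, y \in s -> y.+1 %% q != r].

Lemma admissible_dhl_pattern s :
  (forall q, prime q -> exists2 r, r < q & avoids_residue s q r) ->
  admissible (dhl_pattern s).
Proof.
move=> avoid q q_prime; have [r lt_rq [r_neq0 r_neq2 r_neqS]] := avoid q q_prime.
exists r; split=> // x; rewrite !inE => /or3P[/eqP-> | /eqP-> | /mapP[y sy ->]].
- by rewrite mod0n eq_sym.
- by rewrite eq_sym.
- exact: r_neqS.
Qed.

Lemma dvdn_addS_residues d m n :
  m.+1 %% d + n.+1 %% d = d.+1 -> d %| m + n + 1.
Proof.
move=> sum_res; have := divn_eq m.+1 d; have := divn_eq n.+1 d => En Em.
by apply/dvdnP; exists (m.+1 %/ d + n.+1 %/ d).+1; nia.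
Qed.

Section GoodTuple.

Variables (k : nat) (s : seq nat).
Hypothesis good : good_tuple k s.

Lemma good_tuple_memP y : y \in s -> exists2 i, i < k & nth 0 s i = y.
Proof.
by case: good => size_s _ /(nthP 0)[i]; rewrite size_s => lt_ik <-; exists i.
Qed.

Lemma good_tuple_mem_prime y : y \in s -> prime y.
Proof. by case: good => _ [prime_s _] /good_tuple_memP[i /prime_s ? <-]. Qed.

Lemma good_tuple_mem_gt3 y : y \in s -> 3 < y.
Proof. by case: good => _ [_ [gt3_s _]] /good_tuple_memP[i /gt3_s ? <-]. Qed.

Lemma good_tuple_mem_addn1_prime y z :
  y \in s -> z \in s -> y != z -> prime (y + z + 1).
Proof.
case: good => _ [_ [_ [_ pair_s]]].
move=> /good_tuple_memP[i lt_ik <-] /good_tuple_memP[j lt_jk <-].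
case: (ltngtP i j) => [lt_ij | lt_ji | -> ]; last by rewrite eqxx.
- by case: (pair_s i j lt_ij lt_jk).
- by case: (pair_s j i lt_ji lt_ik); rewrite addnAC addnC addnA.
Qed.

Lemma good_tuple_mem_ndvd y z : y \in s -> z \in s -> y < z -> ~~ (y %| z + 2).
Proof.
case: good => _ [_ [_ [incr_s pair_s]]].
move=> /good_tuple_memP[i lt_ik <-] /good_tuple_memP[j lt_jk <-] lt_yz.
case: (ltngtP i j) => [lt_ij | lt_ji | eq_ij].
- by case: (pair_s i j lt_ij lt_jk).
- by have := ltn_trans (incr_s j i lt_ji lt_ik) lt_yz; rewrite ltnn.
- by move: lt_yz; rewrite eq_ij ltnn.
Qed.

Lemma avoids_residue_notin q : prime q -> q \notin s -> avoids_residue s q 1.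
Proof.
move=> q_prime q_notin; have q_gt1 := prime_gt1 q_prime.
split=> //; first by have [-> // | ?] := eqVneq q 2; rewrite modn_small //; lia.
move=> y sy; apply: contra q_notin => /eqP y1_mod.
have q_dvd_y : q %| y.
  by have := divn_eq y.+1 q; rewrite y1_mod => ?; apply/dvdnP; exists (y.+1 %/ q); lia.
by rewrite (eqP (_ : q == y)) // -dvdn_prime2 // good_tuple_mem_prime.
Qed.

Lemma avoids_residue_5 : 5 \in s -> avoids_residue s 5 4.
Proof.
move=> s5; split=> // y sy; apply/negP => /eqP y1_mod.
have [le_y5 | lt_5y] := leqP y 5; first by have := good_tuple_mem_gt3 sy; lia.
by have := good_tuple_mem_ndvd s5 sy lt_5y; have -> : 5 %| y + 2 by lia.
Qed.

Lemma avoids_residue_mem q :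
  prime q -> q \in s -> q != 5 -> exists2 r, r < q & avoids_residue s q r.
Proof.
move=> q_prime sq q_neq5.
have q_ge7 : 6 < q.
  have q_neq4 : q != 4 by apply/eqP => q4; move: q_prime; rewrite q4.
  have q_neq6 : q != 6 by apply/eqP => q6; move: q_prime; rewrite q6.
  by have := good_tuple_mem_gt3 sq; lia.
have [/hasP[y sy /eqP y1_mod] | no3] := boolP (has (fun y => y.+1 %% q == 3) s).
  exists (q - 2); first lia.
  split; [lia | rewrite modn_small //; lia |].
  move=> z sz; apply/negP => /eqP z1_mod.
  have y_neq_z : y != z by apply/eqP => yz; move: y1_mod; rewrite yz z1_mod; lia.
  have q_dvd : q %| y + z + 1 by apply: dvdn_addS_residues; lia.
  have /eqP q_eq : q == y + z + 1.
    by rewrite -dvdn_prime2 // good_tuple_mem_addn1_prime.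
  have y_gt3 := good_tuple_mem_gt3 sy; have z_gt3 := good_tuple_mem_gt3 sz.
  by move: y1_mod; rewrite modn_small; lia.
exists 3; first lia.
split=> //; first by rewrite modn_small //; lia.
by move=> y sy; apply: contra no3 => y1_mod; apply/hasP; exists y.
Qed.

Lemma dhl_pattern_admissible : admissible (dhl_pattern s).
Proof.
apply: admissible_dhl_pattern => q q_prime.
have [sq | q_notin] := boolP (q \in s); last first.
  by exists 1; [exact: prime_gt1 | exact: avoids_residue_notin].
case: (eqVneq q 5) sq => [-> s5 | q_neq5 sq]; last exact: avoids_residue_mem.
by exists 4; last exact: avoids_residue_5.
Qed.

Lemma good_tuple_rcons p :
  prime p -> 3 < p ->
  (forall y, y \in s -> [/\ y < p, prime (y + p + 1) & ~~ (y %| p + 2)]) ->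
  good_tuple k.+1 (rcons s p).
Proof.
case: good => size_s [prime_s [gt3_s [incr_s pair_s]]] p_prime p_gt3 new_p.
have nth_s i : i < k -> nth 0 s i \in s by move=> ?; rewrite mem_nth ?size_s.
have nth_rcons_s i : i < k.+1 -> nth 0 (rcons s p) i = if i < k then nth 0 s i else p.
  by move=> lt_ik1; rewrite nth_rcons size_s; case: ltnP => // ?; have -> : i == k by lia.
rewrite /good_tuple size_rcons size_s; split=> //.
split; [|split; [|split]] => [i lt_ik1 | i lt_ik1 | i j lt_ij lt_jk1 | i j lt_ij lt_jk1];
  rewrite ?nth_rcons_s //; try lia.
- by case: ifP => [/prime_s|].
- by case: ifP => [/gt3_s|].
- have lt_ik : i < k by lia.
  by rewrite lt_ik; case: ifP => [/(incr_s _ _ lt_ij) | _]; last case: (new_p _ (nth_s _ lt_ik)).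
- have lt_ik : i < k by lia.
  by rewrite lt_ik; case: ifP => [/(pair_s _ _ lt_ij) | _]; last case: (new_p _ (nth_s _ lt_ik)).
Qed.

End GoodTuple.

Theorem mainTheorem2 (k : nat) (s : seq nat) :
  DHL -> 1 <= k -> good_tuple k s ->
  exists p : nat, good_tuple k.+1 (rcons s p).
Proof.
move=> dhl k_gt0 good.
have [n [max_lt_n pattern_prime]] := dhl _ (dhl_pattern_admissible good) (\max_(y <- s) y).+1.
have n_prime : prime n by rewrite -[n]addn0 pattern_prime.
have n2_prime : prime (n + 2) by rewrite pattern_prime // !inE.
have lt_n y : y \in s -> y < n.
  by move=> sy; apply: leq_ltn_trans max_lt_n; exact: (leq_bigmax_seq (F := fun y => y)).
have s0 : nth 0 s 0 \in s by case: good => size_s _; rewrite mem_nth ?size_s.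
exists n; apply: good_tuple_rcons => // [|y sy].
  by have := lt_n _ s0; have := good_tuple_mem_gt3 good s0; lia.
split; first exact: lt_n.
- have -> : y + n + 1 = n + y.+1 by lia.
  by rewrite pattern_prime // !inE map_f ?orbT.
- rewrite (dvdn_prime2 (good_tuple_mem_prime good sy) n2_prime).
  by have := lt_n _ sy; apply: contraTneq => ->; lia.
Qed.
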